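(* Let $m\in\mathbb{N}$ and let $\mathcal{P}_m$ be the set of all functions of the form $$p(z)=ib+\sum_{j=1}^m a_j\frac{s_j+z}{s_j-z},\quad z\in\mathbb{D},$$ where $b\in\mathbb{R}$, $a_1,\dots,a_m>0$, and $s_1,\dots,s_m$ are pairwise distinct points of $\partial\mathbb{D}$. Then $p\mapsto1/p$ is an involution of $\mathcal{P}_m$ onto itself.
   Context: $\mathbb{D}$ denotes the open unit disk. *)

From HB Require Import structures.
From mathcomp Require Import all_boot all_order all_algebra.
From mathcomp Require Import complex.
Set Implicit Arguments. Unset Strict Implicit. Unset Printing Implicit Defensive.
Import Order.TTheory GRing.Theory Num.Theory.
Local Open Scope ring_scope.
Local Open Scope complex_scope.

Definition in_disk (R : rcfType) (z : R[i]) : Prop := `|z| < 1.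

Definition in_Pm (R : rcfType) (m : nat) (p : R[i] -> R[i]) : Prop :=
  exists (b : R) (a : 'I_m -> R) (s : 'I_m -> R[i]),
    (forall j, 0 < a j) /\ (forall j, `|s j| = 1) /\ injective s /\
    (forall z, in_disk z ->
       p z = 'i * b%:C + \sum_(j < m) (a j)%:C * ((s j + z) / (s j - z))).

From mathcomp Require Import all_boot all_order all_algebra.
From mathcomp Require Import complex.
From mathcomp Require Import ring.
Set Implicit Arguments. Unset Strict Implicit. Unset Printing Implicit Defensive.
Import Order.TTheory GRing.Theory Num.Theory.
Local Open Scope ring_scope.

(* Write p(z) = c + sum_j a_j (s_j + z)/(s_j - z), with c imaginary, as N(z)/w_s(z) where
   w_s = prod_j (X - s_j) and N has degree m and leading coefficient c - sum_j a_j != 0.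
   As 2 Re p(z) = 2 (1 - |z|^2) sum_j a_j/|s_j - z|^2, the roots t_k of N lie on the unit
   circle, where t_k p'(t_k) = -2 sum_j a_j/|s_j - t_k|^2 < 0.  So the t_k are simple and
   1/p = w_s/N has at t_k a pole with positive Cayley coefficient
   a'_k = 1/(4 sum_j a_j/|s_j - t_k|^2); that 1/p equals the Cayley sum built from these
   coefficients is an identity between two monic polynomials of degree m agreeing at the
   m points t_k.  Evaluating p * (1/p) = 1 at 0 shows that its constant is imaginary. *)

Section Nodal.
Variable F : fieldType.

Definition nodal n (s : 'I_n -> F) : {poly F} := \prod_(j < n) ('X - (s j)%:P).

Definition nodalD1 n (s : 'I_n -> F) (j : 'I_n) : {poly F} :=
  \prod_(k < n | k != j) ('X - (s k)%:P).

Variables (n : nat) (s : 'I_n -> F).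

Lemma nodalE j : nodal s = ('X - (s j)%:P) * nodalD1 s j.
Proof. by rewrite /nodal (bigD1 j). Qed.

Lemma horner_nodal j z : (nodal s).[z] = (z - s j) * (nodalD1 s j).[z].
Proof. by rewrite (nodalE j) hornerM hornerXsubC. Qed.

Lemma monic_nodal : nodal s \is monic.
Proof. exact: monic_prod_XsubC. Qed.

Lemma monic_nodalD1 j : nodalD1 s j \is monic.
Proof. exact: monic_prod_XsubC. Qed.

Lemma size_nodal : size (nodal s) = n.+1.
Proof. by rewrite /nodal -big_enum size_prod_XsubC size_enum_ord. Qed.

Lemma size_nodalD1 j : size (nodalD1 s j) = n.
Proof.
have := size_nodal; rewrite (nodalE j) size_Mmonic ?polyXsubC_eq0 ?monic_nodalD1 //.
by rewrite size_XsubC => -[].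
Qed.

Lemma horner_nodal_node k : (nodal s).[s k] = 0.
Proof. by rewrite (horner_nodal k) subrr mul0r. Qed.

Lemma horner_nodalD1_node l k : l != k -> (nodalD1 s l).[s k] = 0.
Proof.
move=> lk; rewrite /nodalD1 horner_prod (bigD1 k) 1?eq_sym //=.
by rewrite hornerXsubC subrr mul0r.
Qed.

Lemma horner_nodal_neq0 z : (forall j, z != s j) -> (nodal s).[z] != 0.
Proof.
by move=> zs; rewrite horner_prod; apply/prodf_neq0 => j _; rewrite hornerXsubC subr_eq0.
Qed.

Lemma horner_nodalD1_self j : injective s -> (nodalD1 s j).[s j] != 0.
Proof.
move=> s_inj; rewrite horner_prod; apply/prodf_neq0 => k kj.
by rewrite hornerXsubC subr_eq0 (inj_eq s_inj) eq_sym.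
Qed.

End Nodal.

Section CayleySum.
Variables (F : fieldType) (n : nat).
Implicit Types (c z t : F) (a s : 'I_n -> F).

Definition cayley_sum c a s z : F := c + \sum_(j < n) a j * ((s j + z) / (s j - z)).

(* Numerator of [cayley_sum c a s] over [nodal s], from (s + z)/(s - z) = 2 s/(s - z) - 1. *)
Definition cayley_num c a s : {poly F} :=
  (c - \sum_(j < n) a j)%:P * nodal s - \sum_(j < n) (2 * a j * s j)%:P * nodalD1 s j.

(* The divided difference of [cayley_sum c a s]; at [z = t] it is the derivative. *)
Definition cayley_slope a s z t : F :=
  \sum_(j < n) a j * (2 * s j / ((s j - z) * (s j - t))).

Definition cayley_slope_num a s t : {poly F} :=
  - \sum_(j < n) (2 * a j * s j / (s j - t))%:P * nodalD1 s j.

Lemma horner_cayley_num c a s z : (forall j, z != s j) ->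
  (cayley_num c a s).[z] = (nodal s).[z] * cayley_sum c a s z.
Proof.
move=> zs; rewrite hornerD hornerN hornerM hornerC horner_sum mulrDr mulr_sumr.
rewrite mulrBl mulr_suml -addrA mulrC -sumrN -sumrB; congr (_ + _).
apply: eq_bigr => j _; rewrite hornerM hornerC (horner_nodal s j).
have sz : s j - z != 0 by rewrite subr_eq0 eq_sym.
by field.
Qed.

Lemma horner_cayley_num_node c a s k :
  (cayley_num c a s).[s k] = - (2 * a k * s k * (nodalD1 s k).[s k]).
Proof.
rewrite hornerD hornerN hornerM hornerC horner_nodal_node mulr0 add0r horner_sum.
rewrite (bigD1 k) //= big1 ?addr0 ?hornerM ?hornerC // => j jk.
by rewrite hornerM horner_nodalD1_node ?mulr0.
Qed.

Lemma size_cayley_num c a s : c - \sum_(j < n) a j != 0 ->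
  size (cayley_num c a s) = n.+1 /\ lead_coef (cayley_num c a s) = c - \sum_(j < n) a j.
Proof.
move=> lc0.
have size_lead : size ((c - \sum_(j < n) a j)%:P * nodal s) = n.+1.
  by rewrite mul_polyC size_scale // size_nodal.
have size_tail :
    (size (- \sum_(j < n) (2 * a j * s j)%:P * nodalD1 s j)%R < n.+1)%N.
  rewrite size_polyN ltnS (leq_trans (size_sum _ _ _)) //.
  apply/bigmax_leqP => j _.
  by rewrite mul_polyC (leq_trans (size_scale_leq _ _)) // size_nodalD1.
rewrite size_polyDl ?size_lead // lead_coefDl ?size_lead //.
by rewrite mul_polyC lead_coefZ (monicP (monic_nodal s)) mulr1.
Qed.

Lemma cayley_sum0 c a s : (forall j, s j != 0) ->
  cayley_sum c a s 0 = c + \sum_(j < n) a j.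
Proof.
move=> s0; congr (_ + _); apply: eq_bigr => j _.
by rewrite addr0 subr0 divff ?mulr1.
Qed.

Lemma cayley_sumB c a s z t : (forall j, z != s j) -> (forall j, t != s j) ->
  cayley_sum c a s z - cayley_sum c a s t = (z - t) * cayley_slope a s z t.
Proof.
move=> zs ts; rewrite /cayley_sum opprD addrACA subrr add0r -sumrB mulr_sumr.
apply: eq_bigr => j _ /=.
have sz : s j - z != 0 by rewrite subr_eq0 eq_sym.
have st : s j - t != 0 by rewrite subr_eq0 eq_sym.
by field; rewrite sz st.
Qed.

Lemma horner_cayley_slope_num a s z t : (forall j, z != s j) -> (forall j, t != s j) ->
  (cayley_slope_num a s t).[z] = (nodal s).[z] * cayley_slope a s z t.
Proof.
move=> zs ts; rewrite hornerN horner_sum mulr_sumr -sumrN; apply: eq_bigr => j _.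
rewrite hornerM hornerC (horner_nodal s j).
have sz : s j - z != 0 by rewrite subr_eq0 eq_sym.
have st : s j - t != 0 by rewrite subr_eq0 eq_sym.
by field; rewrite sz st.
Qed.

End CayleySum.

Lemma monic_eq_nodes (F : fieldType) n (p q : {poly F}) (x : 'I_n -> F) :
  p \is monic -> q \is monic -> size p = n.+1 -> size q = n.+1 -> injective x ->
  (forall k, p.[x k] = q.[x k]) -> p = q.
Proof.
move=> /monicP p1 /monicP q1 sp sq x_inj pq; apply/subr0_eq.
apply: (@roots_geq_poly_eq0 _ _ [seq x k | k <- enum 'I_n]).
- by apply/allP => _ /mapP [k _ ->]; rewrite /root hornerD hornerN pq subrr.
- by rewrite map_inj_uniq ?enum_uniq.
rewrite size_map size_enum_ord.
have : (size (p - q)%R <= n.+1)%N.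
  by rewrite (leq_trans (size_polyD _ _)) // size_polyN sp sq maxnn.
rewrite leq_eqVlt ltnS => /orP [/eqP spq|//].
have pn : p`_n = 1 by rewrite -p1 /lead_coef sp.
have qn : q`_n = 1 by rewrite -q1 /lead_coef sq.
have : lead_coef (p - q) != 0 by rewrite lead_coef_eq0 -size_poly_eq0 spq.
by rewrite /lead_coef spq coefB pn qn subrr eqxx.
Qed.

Lemma poly_eq_off_disk (R : numDomainType) (p q : {poly R}) :
  (forall z, 1 < `|z| -> p.[z] = q.[z]) -> p = q.
Proof.
move=> pq; apply/subr0_eq.
apply: (@roots_geq_poly_eq0 _ _ [seq k.+2%:R | k <- iota 0 (size (p - q))]).
- apply/allP => _ /mapP [k _ ->]; apply/rootP; rewrite hornerD hornerN pq ?subrr //.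
  by rewrite normr_nat ltr1n.
- by rewrite map_inj_uniq ?iota_uniq // => i j /eqP; rewrite eqr_nat => /eqP [].
by rewrite size_map size_iota.
Qed.

Lemma closed_field_nodal (F : closedFieldType) n (p : {poly F}) :
  size p = n.+1 -> exists t : 'I_n -> F, p = lead_coef p *: nodal t.
Proof.
case: (closed_field_poly_normal p) => r pE sp.
have lc0 : lead_coef p != 0 by rewrite lead_coef_eq0 -size_poly_eq0 sp.
have sr : size r = n by move: sp; rewrite {1}pE size_scale // size_prod_XsubC => -[].
by exists (fun k => r`_k); rewrite {1}pE /nodal (big_nth 0) sr big_mkord.
Qed.

Lemma sumr_ord_gt0 (R : numDomainType) n (f : 'I_n -> R) :
  (0 < n)%N -> (forall j, 0 < f j) -> 0 < \sum_(j < n) f j.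
Proof.
case: n f => // n f _ f_gt0; rewrite (bigD1 ord0) //= ltr_pwDl //.
by apply: sumr_ge0 => j _; apply: ltW.
Qed.

Lemma unit_neq0 (R : numDomainType) (x : R) : `|x| = 1 -> x != 0.
Proof. by move=> x1; rewrite -normr_eq0 x1 oner_eq0. Qed.

Lemma cayley_sum_root (F : fieldType) n c (a s t : 'I_n -> F) d k :
  cayley_num c a s = d *: nodal t -> (forall j, t k != s j) ->
  cayley_sum c a s (t k) = 0.
Proof.
move=> N_fact ts; have := horner_cayley_num c a ts.
rewrite N_fact hornerZ horner_nodal_node mulr0 => /esym/eqP.
by rewrite mulf_eq0 (negbTE (horner_nodal_neq0 ts)) => /eqP.
Qed.

(* Both sides are the derivative at [t k] of [cayley_num c a s], computed once from the
   factorisation and once as [nodal s] times [cayley_sum c a s], which vanishes at [t k]. *)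
Lemma horner_nodalD1_cayley_root (F : numFieldType) n c (a s t : 'I_n -> F) d k :
  (forall j, `|s j| = 1) -> `|t k| = 1 -> (forall j, t k != s j) ->
  cayley_num c a s = d *: nodal t ->
  d * (nodalD1 t k).[t k] = (nodal s).[t k] * cayley_slope a s (t k) (t k).
Proof.
move=> s_unit t_unit ts N_fact.
suff NE : d *: nodalD1 t k = cayley_slope_num a s (t k).
  by rewrite -hornerZ NE horner_cayley_slope_num.
apply: poly_eq_off_disk => z z_out.
have zs j : z != s j by apply: contraTneq z_out => ->; rewrite s_unit ltxx.
have zt : z - t k != 0 by rewrite subr_eq0; apply: contraTneq z_out => ->; rewrite t_unit ltxx.
have pz : cayley_sum c a s z = (z - t k) * cayley_slope a s z (t k).
  by rewrite -(cayley_sumB c a zs ts) (cayley_sum_root N_fact ts) subr0.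
have Nz : (cayley_num c a s).[z] = d * ((z - t k) * (nodalD1 t k).[z]).
  by rewrite N_fact hornerZ (horner_nodal t k).
apply: (mulfI zt); rewrite hornerZ mulrCA -Nz horner_cayley_num //.
by rewrite horner_cayley_slope_num // pz mulrCA.
Qed.

Section UnitCircle.
Variable C : numClosedFieldType.
Implicit Types (x z : C).

Lemma conjC_unit x : `|x| = 1 -> x^* = x^-1.
Proof. by move=> x1; rewrite invC_norm x1 expr1n invr1 mul1r. Qed.

Lemma cayley_term_addJ x z : `|x| = 1 -> x != z ->
  (x + z) / (x - z) + ((x + z) / (x - z))^* = 2 * (1 - `|z| ^+ 2) / `|x - z| ^+ 2.
Proof.
move=> x1 xz.
have x0 := unit_neq0 x1.
have xz0 : x - z != 0 by rewrite subr_eq0.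
have xzJ : 1 - z^* * x != 0.
  have : (x - z)^* * x != 0 by rewrite mulf_neq0 ?conjC_eq0.
  by rewrite rmorphB /= (conjC_unit x1) mulrBl mulVf.
rewrite fmorph_div rmorphD rmorphB !normCK rmorphB /= (conjC_unit x1).
by field; rewrite x0 xz0 mulNr xzJ.
Qed.

Lemma unit_cayley_slope_term x z b : `|x| = 1 -> `|z| = 1 -> x != z ->
  z * (b * (2 * x / ((x - z) * (x - z)))) = - (2 * (b / `|x - z| ^+ 2)).
Proof.
move=> x1 z1 xz.
have zx0 : z - x != 0 by rewrite subr_eq0 eq_sym.
have xz0 : x - z != 0 by rewrite subr_eq0.
rewrite normCK rmorphB /= (conjC_unit x1) (conjC_unit z1).
by field; rewrite (unit_neq0 x1) (unit_neq0 z1) mulN1r zx0 xz0.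
Qed.

Definition cayley_weight n (a s : 'I_n -> C) z : C := \sum_(j < n) a j / `|s j - z| ^+ 2.

Section PositiveCayleySum.
Variables (n : nat) (c : C) (a s : 'I_n -> C).
Hypotheses (n_gt0 : (0 < n)%N) (c_imag : c^* = - c) (a_gt0 : forall j, 0 < a j)
  (s_unit : forall j, `|s j| = 1).

Lemma cayley_weight_gt0 z : (forall j, z != s j) -> 0 < cayley_weight a s z.
Proof.
move=> zs; apply: sumr_ord_gt0 => // j.
by rewrite divr_gt0 ?a_gt0 // exprn_gt0 // normr_gt0 subr_eq0 eq_sym zs.
Qed.

Lemma cayley_sum_addJ z : (forall j, z != s j) ->
  cayley_sum c a s z + (cayley_sum c a s z)^* = 2 * (1 - `|z| ^+ 2) * cayley_weight a s z.
Proof.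
move=> zs; rewrite rmorphD rmorph_sum /= c_imag addrACA subrr add0r -big_split mulr_sumr.
apply: eq_bigr => j _ /=; rewrite rmorphM /= (conj_Creal (gtr0_real (a_gt0 j))) -mulrDr.
by rewrite cayley_term_addJ 1?eq_sym // mulrCA mulrA.
Qed.

Lemma cayley_sum_root_unit z : (forall j, z != s j) -> cayley_sum c a s z = 0 -> `|z| = 1.
Proof.
move=> zs p0.
have : 2 * (1 - `|z| ^+ 2) * cayley_weight a s z = 0.
  by rewrite -cayley_sum_addJ // p0 conjC0 addr0.
move/eqP; rewrite !mulf_eq0 pnatr_eq0 (gt_eqF (cayley_weight_gt0 zs)) orbF /=.
by rewrite subr_eq0 eq_sym (sqrp_eq1 (normr_ge0 z)) => /eqP.
Qed.

Lemma cayley_slope_unit z : `|z| = 1 -> (forall j, z != s j) ->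
  z * cayley_slope a s z z = - (2 * cayley_weight a s z).
Proof.
move=> z1 zs; rewrite mulr_sumr mulr_sumr -sumrN; apply: eq_bigr => j _.
by rewrite unit_cayley_slope_term // eq_sym.
Qed.

Local Notation lc := (c - \sum_(j < n) a j).

Lemma cayley_lead_neq0 : lc != 0.
Proof.
have A_gt0 := sumr_ord_gt0 n_gt0 a_gt0.
rewrite subr_eq0; apply: contraTneq (A_gt0) => cA.
move: c_imag; rewrite cA (conj_Creal (gtr0_real A_gt0)) => A_opp.
by rewrite {1}A_opp oppr_gt0 (lt_gtF A_gt0).
Qed.

Lemma cayley_num_nodal : exists t : 'I_n -> C, cayley_num c a s = lc *: nodal t.
Proof.
have [size_N lead_N] := size_cayley_num s cayley_lead_neq0.
by rewrite -lead_N; apply: closed_field_nodal.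
Qed.

Section Roots.
Hypothesis s_inj : injective s.
Variable t : 'I_n -> C.
Hypothesis N_fact : cayley_num c a s = lc *: nodal t.

Lemma roots_off_nodes k j : t k != s j.
Proof.
apply/eqP => tks.
have : (cayley_num c a s).[t k] = 0 by rewrite N_fact hornerZ horner_nodal_node mulr0.
rewrite tks horner_cayley_num_node => /eqP.
rewrite oppr_eq0 !mulf_eq0 pnatr_eq0 (gt_eqF (a_gt0 j)) (negbTE (unit_neq0 (s_unit j))).
by rewrite (negbTE (horner_nodalD1_self j s_inj)).
Qed.

Lemma roots_unit k : `|t k| = 1.
Proof.
apply: (cayley_sum_root_unit (roots_off_nodes k)).
exact: cayley_sum_root N_fact (roots_off_nodes k).
Qed.

Lemma cayley_residue k :
  t k * lc * (nodalD1 t k).[t k] = - (2 * cayley_weight a s (t k)) * (nodal s).[t k].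
Proof.
rewrite -mulrA (horner_nodalD1_cayley_root s_unit (roots_unit k) (roots_off_nodes k) N_fact).
by rewrite mulrCA (cayley_slope_unit (roots_unit k) (roots_off_nodes k)) mulrC.
Qed.

Lemma roots_inj : injective t.
Proof.
move=> k l tkl; apply/eqP/negPn/negP => kl.
have := cayley_residue k; rewrite {2}tkl horner_nodalD1_node // mulr0 => /esym/eqP.
rewrite mulf_eq0 oppr_eq0 mulf_eq0 pnatr_eq0 (gt_eqF (cayley_weight_gt0 (roots_off_nodes k))).
by rewrite (negbTE (horner_nodal_neq0 (roots_off_nodes k))).
Qed.

Definition inv_coef k : C := (4 * cayley_weight a s (t k))^-1.

Definition inv_const : C := \sum_(k < n) inv_coef k + lc^-1.

Lemma inv_coef_gt0 k : 0 < inv_coef k.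
Proof.
by rewrite invr_gt0 mulr_gt0 ?ltr0n ?(cayley_weight_gt0 (roots_off_nodes k)).
Qed.

Lemma inv_leadE : inv_const - \sum_(k < n) inv_coef k = lc^-1.
Proof. by rewrite /inv_const addrAC subrr add0r. Qed.

Lemma cayley_num_inv : lc *: cayley_num inv_const inv_coef t = nodal s.
Proof.
have lead_M0 : inv_const - \sum_(k < n) inv_coef k != 0.
  by rewrite inv_leadE invr_eq0 cayley_lead_neq0.
have [size_M lead_M] := size_cayley_num t lead_M0.
apply: (monic_eq_nodes _ (monic_nodal s) _ (size_nodal s) roots_inj).
- by apply/monicP; rewrite lead_coefZ lead_M inv_leadE mulfV ?cayley_lead_neq0.
- by rewrite size_scale ?cayley_lead_neq0.
move=> k; rewrite hornerZ horner_cayley_num_node.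
have w0 : cayley_weight a s (t k) != 0.
  by rewrite gt_eqF ?(cayley_weight_gt0 (roots_off_nodes k)).
transitivity (- (2 * inv_coef k) * (t k * lc * (nodalD1 t k).[t k])); first by ring.
by rewrite cayley_residue /inv_coef; field; rewrite ?w0 ?pnatr_eq0.
Qed.

Lemma cayley_sum_mul_inv z : (forall j, z != s j) -> (forall k, z != t k) ->
  cayley_sum c a s z * cayley_sum inv_const inv_coef t z = 1.
Proof.
move=> zs zt.
apply: (mulfI (horner_nodal_neq0 zs)); apply: (mulfI (horner_nodal_neq0 zt)).
transitivity ((cayley_num c a s).[z] * (cayley_num inv_const inv_coef t).[z]).
  by rewrite !horner_cayley_num //; ring.
have NM : (lc *: cayley_num inv_const inv_coef t).[z] = (nodal s).[z].
  by rewrite cayley_num_inv.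
by rewrite hornerZ in NM; rewrite N_fact hornerZ mulrAC NM mulr1 mulrC.
Qed.

Lemma inv_const_imag : inv_const^* = - inv_const.
Proof.
have s0 j : s j != 0 := unit_neq0 (s_unit j).
have t0 k : t k != 0 := unit_neq0 (roots_unit k).
have zs j : 0 != s j by rewrite eq_sym.
have zt k : 0 != t k by rewrite eq_sym.
have := cayley_sum_mul_inv zs zt; rewrite !cayley_sum0 // => /mulr1_eq pq.
have A_real := conj_Creal (gtr0_real (sumr_ord_gt0 n_gt0 a_gt0)).
have A'_real := conj_Creal (gtr0_real (sumr_ord_gt0 n_gt0 inv_coef_gt0)).
rewrite {1}/inv_const rmorphD fmorphV rmorphB /= c_imag A_real A'_real -opprD invrN pq.
by rewrite /inv_const; ring.
Qed.

End Roots.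
End PositiveCayleySum.
End UnitCircle.

Definition cayley_class (C : numClosedFieldType) n (f : C -> C) : Prop :=
  exists c (a s : 'I_n -> C), [/\ c^* = - c, forall j, 0 < a j, forall j, `|s j| = 1,
    injective s & forall z, `|z| < 1 -> f z = cayley_sum c a s z].

Theorem cayley_class_inv (C : numClosedFieldType) n (f : C -> C) : (0 < n)%N ->
  cayley_class n f ->
  (forall z, `|z| < 1 -> f z != 0) /\ cayley_class n (fun z => (f z)^-1).
Proof.
move=> n_gt0 [c [a [s [c_imag a_gt0 s_unit s_inj fE]]]].
have [t N_fact] : exists t : 'I_n -> C, cayley_num c a s = (c - \sum_(j < n) a j) *: nodal t.
  exact: cayley_num_nodal.
have t_unit := roots_unit n_gt0 c_imag a_gt0 s_unit s_inj N_fact.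
have off z : `|z| < 1 -> (forall j, z != s j) /\ (forall k, z != t k).
  by move=> z1; split=> i; apply: contraTneq z1 => ->; rewrite ?s_unit ?t_unit ltxx.
have fg z : `|z| < 1 -> f z * cayley_sum (inv_const c a s t) (inv_coef a s t) t z = 1.
  move=> z1; have [zs zt] := off z z1; rewrite fE //.
  exact (cayley_sum_mul_inv n_gt0 c_imag a_gt0 s_unit s_inj N_fact zs zt).
split=> [z z1|].
  by apply/eqP => f0; move/eqP: (fg z z1); rewrite f0 mul0r eq_sym oner_eq0.
exists (inv_const c a s t), (inv_coef a s t), t; split.
- exact (inv_const_imag n_gt0 c_imag a_gt0 s_unit s_inj N_fact).
- exact (inv_coef_gt0 n_gt0 a_gt0 s_unit s_inj N_fact).
- exact: t_unit.
- exact (roots_inj n_gt0 c_imag a_gt0 s_unit s_inj N_fact).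
- by move=> z z1; apply: mulr1_eq; apply: fg.
Qed.

Lemma in_PmE (R : rcfType) m (p : R[i] -> R[i]) : in_Pm m p <-> cayley_class m p.
Proof.
split=> [[b [a [s [a_gt0 [s_unit [s_inj pE]]]]]]|[c [a [s [c_imag a_gt0 s_unit s_inj pE]]]]].
  exists ('i * (b%:C)%C), (fun j => (a j)%:C%C), s; split.
  - have b_real : (b%:C)%C \is Num.real by apply/complex_realP; exists b.
    by rewrite rmorphM /= conjCi (conj_Creal b_real) mulNr.
  - by move=> j; rewrite ltcR.
  - exact: s_unit.
  - exact: s_inj.
  - exact: pE.
have c_im : c = 'i * ((complex.Im c)%:C)%C.
  by rewrite complexIm {1}[c]Crect ReE c_imag subrr mul0r add0r.
have a_re j : a j = ((complex.Re (a j))%:C)%C.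
  by rewrite complexRe; apply/esym/Creal_ReP/gtr0_real; apply: a_gt0.
exists (complex.Im c), (fun j => complex.Re (a j)), s.
split; [|split; [exact: s_unit|split; [exact: s_inj|]]].
  by move=> j; rewrite -ltcR -a_re; apply: a_gt0.
move=> z z1; rewrite pE // /cayley_sum {1}c_im; congr (_ + _).
by apply: eq_bigr => j _; rewrite {1}a_re.
Qed.

Unset Implicit Arguments.

Theorem lemma6p13 (R : rcfType) (m : nat) (hm : (0 < m)%N) :
  (forall p, @in_Pm R m p ->
     (forall z, @in_disk R z -> p z != 0) /\ @in_Pm R m (fun z => (p z)^-1)) /\
  (forall p, @in_Pm R m p -> forall z, @in_disk R z -> ((p z)^-1)^-1 = p z) /\
  (forall q, @in_Pm R m q -> exists p, @in_Pm R m p /\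
     forall z : R[i], @in_disk R z -> (p z)^-1 = q z).
Proof.
have inv_Pm p : in_Pm m p ->
    (forall z, in_disk z -> p z != 0) /\ in_Pm m (fun z => (p z)^-1).
  move=> /in_PmE p_class; have [p0 inv_class] := cayley_class_inv hm p_class.
  by split=> //; apply/in_PmE.
split; first exact: inv_Pm.
split; first by move=> p _ z _; rewrite invrK.
move=> q /inv_Pm [_ q_inv]; exists (fun z => (q z)^-1); split=> // z _.
by rewrite invrK.
Qed.
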